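(* Let $P$ be a finite poset whose Hasse diagram is a rooted tree. (1) If the root is the greatest element of $P$, then the basic elements of $P$ are exactly the leaves (the minimal elements). (2) If the root is the least element of $P$, then the basic elements of $P$ are exactly the minimal elements of the induced subposet $P_1=\{x\in P:\ \text{there is exactly one leaf } \ell \text{ with } x\le \ell\}$.
   Context: Such a poset is a $\mathcal{V}$-poset. An element $x$ of a $\mathcal{V}$-poset is basic if: (B.1) there are no two incomparable elements $u,v$ with $x>u$ and $x>v$; (B.2) there are no two incomparable elements $u,v$ with $x<u$ and $x<v$; (B.3) there is no element $u$ with $u<x$ such that for all $w\neq u,x$ one has ($u\ge w\iff x\ge w$) and ($u\le w\iff x\le w$). The leaves of the rooted tree are its vertices with no children (the vertices of degree one other than the root, or the root itself if $P$ has one element). *)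

From mathcomp Require Import all_boot all_order.
Set Implicit Arguments. Unset Strict Implicit. Unset Printing Implicit Defensive.
Import Order.Theory.
Local Open Scope order_scope.

Section HasseTree.
Context {d : Order.disp_t} {T : finPOrderType d}.

Definition covers (x y : T) : bool :=
  (x < y) && [forall z, ~~ ((x < z) && (z < y))].

Definition hasse (x y : T) : bool := covers x y || covers y x.

Definition hasse_connected : Prop := forall x y : T, connect hasse x y.

(* no simple cycle (of length >= 3) in the Hasse diagram *)
Definition hasse_acyclic : Prop :=
  forall (x : T) (p : seq T), uniq (x :: p) -> 2 <= size p ->
    path hasse x p -> ~~ hasse (last x p) x.

Definition hasse_tree : Prop := hasse_connected /\ hasse_acyclic.

Definition leaf (r x : T) : bool :=
  (#|T| == 1)%N || ((x != r) && (#|[set y | hasse x y]| == 1)%N).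

Definition minimal (x : T) : Prop := forall y : T, ~ (y < x).

Definition basic (x : T) : Prop :=
  (~ exists u v : T, (u >< v) /\ u < x /\ v < x) /\
  (~ exists u v : T, (u >< v) /\ x < u /\ x < v) /\
  (~ exists u : T, u < x /\
       forall w : T, w != u -> w != x ->
         ((w <= u) <-> (w <= x)) /\ ((u <= w) <-> (x <= w))).

Definition in_P1 (r x : T) : bool :=
  #|[set l | leaf r l && (x <= l)]| == 1%N.

End HasseTree.

(* In a Hasse tree, two upper covers of x with a common upper bound coincide:
   otherwise covering chains from them to a minimal common upper bound close a
   cycle through x.  So when the root r is the top, every up-set of x is a chain,
   and dually, when r is the bottom, every down-set is a chain.
   A lower cover c of x is a twin of x (violating B.3) as soon as everything
   below x is comparable with c and the up-set of c is a chain.  With r on top,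
   (B.1) and the chain property thus leave only the minimal elements, which are
   the leaves.  With r at the bottom, the leaves are the maximal elements, so P1
   is the set of x whose up-set is a chain; since a twin below an element of P1
   is again in P1, the same argument gives the minimal elements of P1. *)

From mathcomp Require Import all_boot all_order.
Set Implicit Arguments. Unset Strict Implicit. Unset Printing Implicit Defensive.
Import Order.Theory.
Local Open Scope order_scope.

Section Covers.
Context {d : Order.disp_t} {T : finPOrderType d}.
Implicit Types x y z u v w a b c : T.

Lemma covers_lt x y : covers x y -> x < y.
Proof. by case/andP. Qed.

Lemma covers_between x y z : covers x y -> x < z -> z < y -> False.
Proof. by case/andP=> _ /forallP/(_ z) /negP nxzy xz zy; apply: nxzy; rewrite xz zy. Qed.

Lemma coversI x y : x < y -> (forall z, x < z -> z < y -> False) -> covers x y.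
Proof.
move=> xy between; rewrite /covers xy; apply/forallP => z.
by apply/negP => /andP[]; exact: between.
Qed.

Lemma card_lt_down c a : c < a -> (#|[set z | (z < c)%O]| < #|[set z | (z < a)%O]|)%N.
Proof.
move=> ca; apply: proper_card; rewrite properE; apply/andP; split.
  by apply/subsetP => z; rewrite !inE => zc; exact: lt_trans zc ca.
by apply/subsetPn; exists c; rewrite !inE ?ltxx.
Qed.

Lemma lt_wf_ind (P : T -> Prop) :
  (forall x, (forall y, y < x -> P y) -> P x) -> forall x, P x.
Proof.
move=> IH x; have [n] := ubnP #|[set y | y < x]|.
elim: n x => // n IHn x; rewrite ltnS => hx; apply: IH => y yx.
by apply: IHn; exact: leq_trans (card_lt_down yx) hx.
Qed.

Lemma exists_minimal (P : pred T) x : P x ->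
  exists y, [/\ P y, y <= x & forall z, P z -> ~ z < y].
Proof.
elim/lt_wf_ind: x => x IH Px.
have [z /andP[Pz zx]|none] := pickP (fun z => P z && (z < x)).
  have [y [Py yz y_min]] := IH z zx Pz.
  by exists y; split => //; exact: le_trans yz (ltW zx).
by exists x; split => // z Pz zx; move: (none z); rewrite Pz zx.
Qed.

Lemma upper_cover_exists x y : x < y -> exists2 c, covers x c & c <= y.
Proof.
move=> xy; have : (x < y) && (y <= y) by rewrite xy lexx.
case/(exists_minimal (P := fun z => (x < z) && (z <= y))) => c [/andP[xc cy] _ c_min].
exists c => //; apply: coversI => // z xz zc.
by apply: (c_min z) => //; rewrite xz (le_trans (ltW zc) cy).
Qed.

Lemma covers_dual x y : @covers _ T^d x y = covers y x.
Proof. by rewrite /covers; congr andb; apply: eq_forallb => z; rewrite andbC. Qed.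

Lemma hasse_dual x y : @hasse _ T^d x y = hasse x y.
Proof. by rewrite /hasse !covers_dual orbC. Qed.

Lemma hasse_tree_dual : hasse_tree (T := T) -> hasse_tree (T := T^d).
Proof.
case=> connected acyclic; split => [x y|x p].
  by rewrite (eq_connect hasse_dual); exact: connected.
by rewrite (eq_path hasse_dual) hasse_dual; exact: acyclic.
Qed.

Lemma leaf_dual (r x : T) : @leaf _ T^d r x = leaf r x.
Proof.
rewrite /leaf; congr (_ || (_ && (_ == _))).
by apply: eq_card => y; rewrite !inE hasse_dual.
Qed.

End Covers.

Section CoverChains.
Context {d : Order.disp_t} {T : finPOrderType d}.
Implicit Types x y z u v w a b c : T.

Lemma gt_wf_ind (P : T -> Prop) :
  (forall x, (forall y, x < y -> P y) -> P x) -> forall x, P x.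
Proof. exact: (@lt_wf_ind _ T^d). Qed.

Lemma exists_maximal (P : pred T) x : P x ->
  exists y, [/\ P y, x <= y & forall z, P z -> ~ y < z].
Proof. exact: (@exists_minimal _ T^d). Qed.

Lemma lower_cover_exists x y : y < x -> exists2 c, covers c x & y <= c.
Proof.
by case/(@upper_cover_exists _ T^d) => c; rewrite covers_dual; exists c.
Qed.

Lemma covers_chain a b : a <= b -> exists2 p, path covers a p & last a p = b.
Proof.
elim/gt_wf_ind: a => a IH ab; have [<-|ab'] := eqVneq a b; first by exists [::].
have [c ac cb] : exists2 c, covers a c & c <= b.
  by apply: upper_cover_exists; rewrite lt_neqAle ab' ab.
have [p cp lp] := IH c (covers_lt ac) cb.
by exists (c :: p); rewrite /= ?ac.
Qed.

Lemma covers_path_pairwise a p : path covers a p -> pairwise <%O (a :: p).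
Proof.
by move/(sub_path (@covers_lt _ _)); rewrite (path_pairwise (@lt_trans _ T)).
Qed.

Lemma covers_path_uniq a p : path covers a p -> uniq (a :: p).
Proof. by move/covers_path_pairwise/(pairwise_uniq (@ltxx _ T)). Qed.

Lemma covers_path_ge a p z : path covers a p -> z \in a :: p -> a <= z.
Proof.
move/covers_path_pairwise => /= /andP[/allP a_lt _].
by rewrite inE => /orP[/eqP->|/a_lt/ltW].
Qed.

Lemma covers_path_lt_last a p b z : path covers a (rcons p b) -> z \in a :: p -> z < b.
Proof.
move/covers_path_pairwise; rewrite -rcons_cons pairwise_rcons.
by case/andP => /allP lt_b _ /lt_b.
Qed.

End CoverChains.

Section BasicElements.
Context {d : Order.disp_t} {T : finPOrderType d}.
Implicit Types x y z u v w a b c : T.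

Definition chain_above x : Prop := forall u v, x <= u -> x <= v -> u >=< v.

Definition chain_below x : Prop := forall u v, u <= x -> v <= x -> u >=< v.

Definition maximal x : Prop := forall y, ~ x < y.

(* Condition (B.3) says that no u < x is a twin of x. *)
Definition twins u x : Prop := forall w, w != u -> w != x ->
  ((w <= u) <-> (w <= x)) /\ ((u <= w) <-> (x <= w)).

Lemma chain_above_le x y : x <= y -> chain_above x -> chain_above y.
Proof. by move=> xy cx u v yu yv; apply: cx; exact: le_trans xy _. Qed.

Lemma maximal_above x : exists2 m, x <= m & maximal m.
Proof.
have [m [_ xm m_max]] := exists_maximal (P := predT) (isT : predT x).
by exists m => // y; exact: m_max.
Qed.

Lemma maximal_comparable_eq x y : maximal x -> maximal y -> x >=< y -> x = y.
Proof.
move=> x_max y_max /orP[|]; rewrite le_eqVlt => /orP[/eqP // | lt].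
  by case: (x_max y).
by case: (y_max x).
Qed.

Lemma twins_chain_above u x : twins u x -> chain_above x -> chain_above u.
Proof.
move=> tw cx.
have above_x a : u <= a -> a = u \/ x <= a.
  move=> ua; have [->|au] := eqVneq a u; first by left.
  have [->|ax] := eqVneq a x; first by right.
  by right; apply/(tw a au ax).2.
move=> a b ua ub; case: (above_x a ua) => [->|xa]; first exact: le_comparable.
case: (above_x b ub) => [->|xb]; first by rewrite comparable_sym le_comparable.
exact: cx.
Qed.

Lemma basic_chain_above x : basic x -> chain_above x.
Proof.
case=> _ [no_upper_pair _] u v xu xv.
have [<-|xu'] := eqVneq x u; first exact: le_comparable.
have [<-|xv'] := eqVneq x v; first by rewrite comparable_sym le_comparable.
apply: contraT => uv; exfalso; apply: no_upper_pair; exists u, v.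
by rewrite !lt_neqAle xu' xv' xu xv.
Qed.

Lemma covers_twins c x : covers c x -> (forall w, w < x -> w >=< c) ->
  chain_above c -> twins c x.
Proof.
move=> cx below_x cc w wc wx; have cx' := covers_lt cx.
split; split.
- by move=> wc'; exact: le_trans wc' (ltW cx').
- move=> wx'; have wx'' : w < x by rewrite lt_neqAle wx wx'.
  case/orP: (below_x w wx'') => // cw; exfalso.
  by apply: covers_between cx _ wx''; rewrite lt_neqAle eq_sym wc cw.
- move=> cw; have cw' : c < w by rewrite lt_neqAle eq_sym wc cw.
  case/orP: (cc x w (ltW cx') cw) => // wx'; exfalso.
  by apply: covers_between cx cw' _; rewrite lt_neqAle wx wx'.
- by move=> xw; exact: le_trans (ltW cx') xw.
Qed.

Lemma basic_lower_cover c x : basic x -> covers c x -> chain_above c ->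
  exists2 w, w < x & w >< c.
Proof.
case=> _ [_ no_twin] cx cc.
have [w /andP[wx wc]|none] := pickP (fun w => (w < x) && (w >< c)).
  by exists w.
exfalso; apply: no_twin; exists c; split; first exact: covers_lt.
apply: covers_twins => // w wx.
by move: (none w); rewrite wx => /negbFE.
Qed.

End BasicElements.

Section HasseTree.
Context {d : Order.disp_t} {T : finPOrderType d}.
Implicit Types x y z u v w a b c : T.
Hypothesis tree : hasse_tree (T := T).

Lemma no_minimal_common_ub_above x u v w : covers x u -> covers x v ->
  u <= w -> v < w -> (forall z, u <= z -> v <= z -> ~ z < w) -> False.
Proof.
move=> xu xv uw vw w_min.
have [p up lp] := covers_chain uw.
have [q'] := covers_chain (ltW vw); case/lastP: q' => [/= _ wv|q z].
  by move: vw; rewrite wv ltxx.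
rewrite last_rcons => vq zw; rewrite {z}zw in vq.
have vq' : path covers v q by move: vq; rewrite rcons_path => /andP[].
(* The cycle x, u, ..., w, ..., v is simple because w is a minimal common upper
   bound of u and v. *)
pose s := (u :: p) ++ rev (v :: q).
have last_s : last x s = v by rewrite /s last_cat rev_cons last_rcons.
have size_s : (2 <= size s)%N by rewrite /s size_cat size_rev /= addnS.
have path_s : path hasse x s.
  rewrite /s cat_path /= {1}/hasse xu lp /=; apply/andP; split.
    by apply: sub_path up => a b ab; rewrite /hasse ab.
  have := rev_path hasse v (rcons q w); rewrite last_rcons belast_rcons => ->.
  by apply: sub_path vq => a b ab; rewrite /hasse ab orbT.
have uniq_s : uniq (x :: s).
  have x_notin_u : x \notin u :: p.
    by apply/negP => /(covers_path_ge up); rewrite (lt_geF (covers_lt xu)).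
  have x_notin_v : x \notin v :: q.
    by apply/negP => /(covers_path_ge vq'); rewrite (lt_geF (covers_lt xv)).
  have disjoint_uv : ~~ has (mem (u :: p)) (rev (v :: q)).
    apply/hasPn => z; rewrite mem_rev => zq; apply/negP => /(covers_path_ge up) uz.
    exact: w_min z uz (covers_path_ge vq' zq) (covers_path_lt_last vq zq).
  rewrite /s cons_uniq mem_cat mem_rev negb_or x_notin_u x_notin_v.
  by rewrite cat_uniq rev_uniq disjoint_uv !covers_path_uniq.
by have := tree.2 x s uniq_s size_s path_s; rewrite last_s /hasse xv orbT.
Qed.

Lemma upper_covers_eq x u v w : covers x u -> covers x v -> u <= w -> v <= w -> u = v.
Proof.
move=> xu xv uw vw; have [//|uv] := eqVneq u v; exfalso.
have uvw : (u <= w) && (v <= w) by rewrite uw vw.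
have [m [/andP[um vm] _ m_min]] :=
  exists_minimal (P := fun z => (u <= z) && (v <= z)) uvw.
have {}m_min z : u <= z -> v <= z -> ~ z < m by move=> uz vz; apply: m_min; rewrite uz.
have [vm'|] := boolP (v < m); first exact: no_minimal_common_ub_above xu xv um vm' m_min.
rewrite lt_neqAle vm andbT negbK => /eqP vm'.
apply: no_minimal_common_ub_above xv xu vm _ (fun z vz uz => m_min z uz vz).
by rewrite -vm' lt_neqAle uv vm'.
Qed.

End HasseTree.

Section RootedAtTop.
Context {d : Order.disp_t} {T : finPOrderType d}.
Implicit Types x y z u v w a b c : T.
Hypothesis tree : hasse_tree (T := T).
Variable r : T.
Hypothesis r_top : forall x, x <= r.

Lemma top_chain_above x : chain_above x.
Proof.
elim/(@gt_wf_ind _ T): x => x IH u v xu xv.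
have [<-|xu'] := eqVneq x u; first exact: le_comparable.
have [<-|xv'] := eqVneq x v; first by rewrite comparable_sym le_comparable.
have [c xc cu] : exists2 c, covers x c & c <= u.
  by apply: upper_cover_exists; rewrite lt_neqAle xu' xu.
have [c' xc' c'v] : exists2 c', covers x c' & c' <= v.
  by apply: upper_cover_exists; rewrite lt_neqAle xv' xv.
have cc' := upper_covers_eq tree xc xc' (r_top c) (r_top c').
by apply: IH (covers_lt xc) _ _ cu _; rewrite cc'.
Qed.

Lemma top_leaf_minimal x : leaf r x <-> minimal x.
Proof.
rewrite /leaf; have [/eqP T1|T1] /= := boolP (#|T| == 1)%N.
  have /fintype_le1P/(_ x) all_x : (#|T| <= 1)%N by rewrite T1.
  by split => // _ y; rewrite (all_x y) ltxx.
have [->|xr] /= := eqVneq x r.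
  split => // r_min; case/negP: T1; apply/card1P; exists r => y.
  by rewrite !inE; have := r_top y; rewrite le_eqVlt => /orP[->|/r_min].
have [c xc _] : exists2 c, covers x c & c <= r.
  by apply: upper_cover_exists; rewrite lt_neqAle xr r_top.
split.
- case/cards1P => a nbhd y yx; have [c' c'x _] := lower_cover_exists yx.
  have : c \in [set a] by rewrite -nbhd inE /hasse xc.
  have : c' \in [set a] by rewrite -nbhd inE /hasse c'x orbT.
  rewrite !inE => /eqP c'a /eqP ca.
  by move: (lt_trans (covers_lt c'x) (covers_lt xc)); rewrite c'a -ca ltxx.
- move=> x_min; apply/cards1P; exists c; apply/setP => y; rewrite !inE.
  apply/idP/eqP => [/orP[xy|/covers_lt/x_min //]|->]; last by rewrite /hasse xc.
  exact: (upper_covers_eq tree xy xc (r_top y) (r_top c)).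
Qed.

Lemma top_basic_minimal x : basic x <-> minimal x.
Proof.
split=> [bx y yx | x_min].
  have [c cx _] := lower_cover_exists yx.
  have [w wx wc] := basic_lower_cover bx cx (@top_chain_above c).
  case: bx => no_lower_pair _; apply: no_lower_pair; exists w, c; split=> //; split=> //.
  exact: covers_lt.
split; [|split].
- by case=> u [v [_ [/x_min]]].
- case=> u [v [uv [xu xv]]].
  by move: uv; rewrite (top_chain_above (ltW xu) (ltW xv)).
- by case=> u [/x_min].
Qed.

End RootedAtTop.

Section RootedAtBottom.
Context {d : Order.disp_t} {T : finPOrderType d}.
Implicit Types x y z u v w a b c : T.
Hypothesis tree : hasse_tree (T := T).
Variable r : T.
Hypothesis r_bot : forall x, r <= x.

Lemma bottom_chain_below x : chain_below x.
Proof.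
move=> u v ux vx; rewrite comparable_sym.
exact: (@top_chain_above _ T^d (hasse_tree_dual tree) r r_bot x u v ux vx).
Qed.

Lemma bottom_leaf_maximal x : leaf r x <-> maximal x.
Proof. by rewrite -leaf_dual; exact: (top_leaf_minimal (hasse_tree_dual tree) r_bot). Qed.

Lemma in_P1_chain_above x : in_P1 r x <-> chain_above x.
Proof.
split=> [/eqP P1x u v xu xv | cx].
  apply: contraT => uv; exfalso.
  have [mu umu mu_max] := maximal_above u.
  have [mv vmv mv_max] := maximal_above v.
  have mu_mv : mu != mv.
    apply: contraNneq uv => mu_mv.
    by rewrite mu_mv in umu; exact: bottom_chain_below umu vmv.
  have : (#|[set mu; mv]| <= #|[set l | leaf r l && (x <= l)%O]|)%N.
    apply/subset_leq_card/subsetP => l; rewrite !inE => /orP[]/eqP->.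
      by rewrite (le_trans xu umu) andbT; apply/bottom_leaf_maximal.
    by rewrite (le_trans xv vmv) andbT; apply/bottom_leaf_maximal.
  by rewrite cards2 mu_mv P1x.
have [m xm m_max] := maximal_above x.
apply/cards1P; exists m; apply/setP => l; rewrite !inE.
apply/andP/eqP => [[/bottom_leaf_maximal l_max xl]|->].
  exact: maximal_comparable_eq l_max m_max (cx _ _ xl xm).
by split=> //; apply/bottom_leaf_maximal.
Qed.

Lemma bottom_basic x :
  basic x <-> chain_above x /\ (forall y, chain_above y -> ~ y < x).
Proof.
split=> [bx | [cx x_min]].
  split=> [|y cy yx]; first exact: basic_chain_above.
  have [c cx yc] := lower_cover_exists yx.
  have [w wx] := basic_lower_cover bx cx (chain_above_le yc cy).
  by rewrite (bottom_chain_below (ltW wx) (ltW (covers_lt cx))).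
split; [|split].
- case=> u [v [uv [ux vx]]].
  by move: uv; rewrite (bottom_chain_below (ltW ux) (ltW vx)).
- case=> u [v [uv [xu xv]]].
  by move: uv; rewrite (cx _ _ (ltW xu) (ltW xv)).
- by case=> u [ux tw]; exact: x_min u (twins_chain_above tw cx) ux.
Qed.

End RootedAtBottom.

Theorem proposition3p8 (d : Order.disp_t) (T : finPOrderType d) (r : T) :
  @hasse_tree d T ->
  ((forall x : T, x <= r) ->
     forall x : T, (basic x <-> leaf r x) /\ (leaf r x <-> minimal x)) /\
  ((forall x : T, r <= x) ->
     forall x : T, basic x <-> (in_P1 r x /\ forall y : T, in_P1 r y -> ~ (y < x))).
Proof.
move=> tree; split=> [r_top x | r_bot x].
  have leafE := top_leaf_minimal tree r_top x.
  split=> //; exact: iff_trans (top_basic_minimal tree r_top x) (iff_sym leafE).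
have P1E := in_P1_chain_above tree r_bot.
apply: (iff_trans (bottom_basic tree r_bot x)).
split=> [[/P1E x_P1 x_min] | [/P1E x_ch x_min]]; split=> // y /P1E; exact: x_min.
Qed.
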